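(* Let $k\ge1$, let $a\ge b$ be the dimensions of irreducible algebraic sets $A,B\subset\mathbb{C}^k$, put $m=2k-a-b$, and let $h^*,h_0$ be integers with $b\ge h^*>\dim(A\cap B)$ and $\max(a+b-k,0)\le h_0\le$ the minimum dimension of any irreducible component of $A\cap B$. Let $\mathbb A,\mathbf B\in\mathbb{C}^{(a+b)\times k}$, $\mathbf C\in\mathbb{C}^{k\times 2k}$, $\mathbf d\in\mathbb{C}^k$ be generic, $\mathbf A=[\mathbb A\ \ -\mathbb A]$, $\mathbf Y_h=\mathbf A+\mathbf B\mathbf P_h\mathbf C$, and let $\epsilon\in\mathbb{C}^{2k}$ be the unique solution of $w_{1..k}-w_{k+1..2k}=0$, $\mathbf C w=-\mathbf d$ (so $\mathbf A\epsilon=0$ and $\mathbf C\epsilon+\mathbf d=0$). Fix $h_0\le j<i\le h^*$ and matrices $E\in\mathbb{C}^{2k\times(m-i+j)}$, $F,G\in\mathbb{C}^{2k\times(i-j)}$ such that the columns of $[E\ F]$ form a basis of $\ker\mathbf Y_i$, the columns of $[E\ G]$ form a basis of $\ker\mathbf Y_j$, and $\mathbf P_{ji}\mathbf CF=\mathbf P_{ji}\mathbf CG$ is the $k\times(i-j)$ matrix with $I_{i-j}$ in rows $j+1,\dots,i$ and zeros elsewhere. For $\gamma\in\mathbb{C}$, $t\in[0,1]$, $y\in\mathbb{C}^m$ define $$W_{i,j}(t,y)=\epsilon+\bigl[\,E\ \ \ tF+\gamma(1-t)G\,\bigr]y .$$ Then for all but finitely many $\gamma\in\mathbb{C}$ with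 $|\gamma|=1$, for every $t\in[0,1]$ there is $\tau\in\mathbb{C}$ (nonzero when $t\neq0$) such that the solution set in $\mathbb{C}^{2k}$ of the linear system $$\mathbf A w+\mathbf B(\mathbf P_j+\tau\mathbf P_{ji})(\mathbf C w+\mathbf d)=0$$ is exactly $\{W_{i,j}(t,y):y\in\mathbb{C}^m\}$.
   Context: $\mathbf P_h$ is the $k\times k$ diagonal matrix with $h$ ones followed by $k-h$ zeros; $\mathbf P_{ji}$ is the $k\times k$ diagonal matrix with $j$ zeros, then $i-j$ ones, then $k-i$ zeros. ''Generic'' means outside a proper algebraic subset of the parameter space (e.g. random complex entries). *)

From mathcomp Require Import all_boot all_algebra.
From mathcomp Require Import reals complex.
Set Implicit Arguments. Unset Strict Implicit. Unset Printing Implicit Defensive.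
Import GRing.Theory Num.Theory.
Local Open Scope ring_scope.

Inductive polyfun (T : Type) (K : nzRingType) (coord : (T -> K) -> Prop)
  : (T -> K) -> Prop :=
| pf_const (c : K) : polyfun coord (fun _ => c)
| pf_coord (f : T -> K) : coord f -> polyfun coord f
| pf_add (f g : T -> K) : polyfun coord f -> polyfun coord g ->
    polyfun coord (fun x => f x + g x)
| pf_mul (f g : T -> K) : polyfun coord f -> polyfun coord g ->
    polyfun coord (fun x => f x * g x).

Definition cV_coord (K : nzRingType) (k : nat) (f : 'cV[K]_k -> K) : Prop :=
  exists i : 'I_k, f = fun x => x i 0.

Definition poly_on (K : nzRingType) (k : nat) (f : 'cV[K]_k -> K) :=
  polyfun (@cV_coord K k) f.

Definition sub_pt (K : nzRingType) (k : nat) (S T : 'cV[K]_k -> Prop) :=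
  forall x, S x -> T x.
Definition eq_pt (K : nzRingType) (k : nat) (S T : 'cV[K]_k -> Prop) :=
  forall x, S x <-> T x.

Definition algebraic_set (K : nzRingType) (k : nat) (S : 'cV[K]_k -> Prop) :=
  exists (n : nat) (fs : 'I_n -> 'cV[K]_k -> K),
    (forall l, poly_on (fs l)) /\ (forall x, S x <-> forall l, fs l x = 0).

Definition irreducible_set (K : nzRingType) (k : nat) (S : 'cV[K]_k -> Prop) :=
  [/\ algebraic_set S, exists x, S x &
    forall S1 S2 : 'cV[K]_k -> Prop, algebraic_set S1 -> algebraic_set S2 ->
      eq_pt S (fun x => S1 x \/ S2 x) -> eq_pt S1 S \/ eq_pt S2 S].

Definition has_chain (K : nzRingType) (k : nat) (S : 'cV[K]_k -> Prop) (n : nat) :=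
  exists Z : nat -> 'cV[K]_k -> Prop,
    (forall l, (l <= n)%N -> irreducible_set (Z l) /\ sub_pt (Z l) S) /\
    (forall l, (l < n)%N -> sub_pt (Z l) (Z l.+1) /\ ~ sub_pt (Z l.+1) (Z l)).

(* (Krull) dimension of an algebraic set: the maximal length of a chain of
   irreducible algebraic subsets.  The empty set has no dimension in nat
   (it has dimension -1). *)
Definition alg_dim (K : nzRingType) (k : nat) (S : 'cV[K]_k -> Prop) (d : nat) :=
  has_chain S d /\ ~ has_chain S d.+1.

Definition irr_component (K : nzRingType) (k : nat) (Z S : 'cV[K]_k -> Prop) :=
  [/\ irreducible_set Z, sub_pt Z S &
    forall Z', irreducible_set Z' -> sub_pt Z Z' -> sub_pt Z' S -> sub_pt Z' Z].

Definition params (K : nzRingType) (a b k : nat) : Type :=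
  ('M[K]_(a + b, k) * 'M[K]_(a + b, k) * 'M[K]_(k, k + k) * 'cV[K]_k)%type.

Definition param_coord (K : nzRingType) (a b k : nat)
    (f : params K a b k -> K) : Prop :=
  (exists (r : 'I_(a + b)) (c : 'I_k), f = fun p => p.1.1.1 r c) \/
  (exists (r : 'I_(a + b)) (c : 'I_k), f = fun p => p.1.1.2 r c) \/
  (exists (r : 'I_k) (c : 'I_(k + k)), f = fun p => p.1.2 r c) \/
  (exists (r : 'I_k), f = fun p => p.2 r 0).

(* "generic": holds outside a proper algebraic subset of the parameter space,
   i.e. wherever some not-identically-zero polynomial does not vanish *)
Definition generic_params (K : nzRingType) (a b k : nat)
    (P : params K a b k -> Prop) : Prop :=
  exists f : params K a b k -> K,
    [/\ polyfun (@param_coord K a b k) f, exists p, f p != 0 &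
        forall p, f p != 0 -> P p].

Definition Pmx (K : nzRingType) (k h : nat) : 'M[K]_k :=
  \matrix_(r < k, c < k) ((r == c) && (r < h)%N)%:R.

Definition Pji (K : nzRingType) (k j i : nat) : 'M[K]_k :=
  \matrix_(r < k, c < k) [&& r == c, (j <= r)%N & (r < i)%N]%:R.

(* the k x (i-j) matrix with I_{i-j} in rows j+1..i (1-based), 0 elsewhere *)
Definition Jmx (K : nzRingType) (k j i : nat) : 'M[K]_(k, i - j) :=
  \matrix_(r < k, c < i - j) (r == j + c :> nat)%:R.

Definition col_basis_of_ker (K : nzRingType) (p q r : nat)
    (M : 'M[K]_(p, q)) (Y : 'M[K]_(r, p)) : Prop :=
  (forall y : 'cV[K]_q, M *m y = 0 -> y = 0) /\
  (forall w : 'cV[K]_p, Y *m w = 0 <-> exists y : 'cV[K]_q, w = M *m y).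

(* Only one genericity condition is needed: the leading minor of B is
   invertible, so B is injective on vectors supported in the first i rows.
   As Y_i = Y_j + B P_ji C, this gives P_ji C E = 0 and Y_j F = - B J.
   Shifting w by eps absorbs d (A eps = 0, C eps = - d) and turns the
   tau-system into the kernel of Y_j + tau B P_ji C, which for every tau is
   spanned by E and tau F + (1 - tau) G: if P_ji C v = J z, then v - tau F z
   lies in ker Y_j, and its G-coordinate is read off through the injective J.
   For |gamma| = 1, gamma <> -1, the scalar s = t + gamma (1 - t) is nonzero,
   and with tau = t / s we get t F + gamma (1 - t) G = s (tau F + (1 - tau) G). *)

From mathcomp Require Import all_boot all_algebra zify ring lra.
From mathcomp Require Import boolp reals complex.
Set Implicit Arguments. Unset Strict Implicit. Unset Printing Implicit Defensive.
Import GRing.Theory Num.Theory.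
Local Open Scope ring_scope.

Section PolynomialFunctions.
Variables (T : Type) (K : nzRingType) (coord : (T -> K) -> Prop).

Lemma polyfun_ext f g : polyfun coord f -> f =1 g -> polyfun coord g.
Proof. by move=> pf /funext <-. Qed.

Lemma polyfun_sum (I : Type) (r : seq I) (P : pred I) (g : I -> T -> K) :
  (forall i, polyfun coord (g i)) ->
  polyfun coord (fun x => \sum_(i <- r | P i) g i x).
Proof.
move=> pg; elim: r => [|y r IHr].
  by apply: polyfun_ext (pf_const _ 0) _ => x; rewrite big_nil.
case Py: (P y); last by apply: polyfun_ext IHr _ => x; rewrite big_cons Py.
by apply: polyfun_ext (pf_add (pg y) IHr) _ => x; rewrite big_cons Py.
Qed.

Lemma polyfun_prod (I : Type) (r : seq I) (P : pred I) (g : I -> T -> K) :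
  (forall i, polyfun coord (g i)) ->
  polyfun coord (fun x => \prod_(i <- r | P i) g i x).
Proof.
move=> pg; elim: r => [|y r IHr].
  by apply: polyfun_ext (pf_const _ 1) _ => x; rewrite big_nil.
case Py: (P y); last by apply: polyfun_ext IHr _ => x; rewrite big_cons Py.
by apply: polyfun_ext (pf_mul (pg y) IHr) _ => x; rewrite big_cons Py.
Qed.

End PolynomialFunctions.

Lemma polyfun_det (T : Type) (K : comNzRingType) (coord : (T -> K) -> Prop)
    n (M : T -> 'M[K]_n) :
  (forall r c, polyfun coord (fun x => M x r c)) ->
  polyfun coord (fun x => \det (M x)).
Proof.
move=> pM; apply: polyfun_sum => s.
by apply: pf_mul; [exact: pf_const | apply: polyfun_prod].
Qed.

Definition lead_minor (K : Type) m n (M : 'M[K]_(m, n)) : 'M[K]_(minn m n) :=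
  \matrix_(r, c) M (widen_ord (geq_minl m n) r) (widen_ord (geq_minr m n) c).

Lemma generic_paramsW (K : nzRingType) a b k (P Q : params K a b k -> Prop) :
  generic_params P -> (forall p, P p -> Q p) -> generic_params Q.
Proof.
by move=> [f [pf [p fp] fP]] PQ; exists f; split=> [| |q /fP/PQ] //; exists p.
Qed.

Lemma lead_minor_generic (K : comNzRingType) a b k :
  generic_params (fun p : params K a b k => \det (lead_minor p.1.1.2) != 0).
Proof.
exists (fun p => \det (lead_minor p.1.1.2)); split=> //.
  apply: polyfun_det => r c; apply: pf_coord; right; left.
  by do 2 eexists; apply/funext => p; rewrite mxE.
exists (0, \matrix_(r, c) (r == c :> nat)%:R, 0, 0) => /=.
have -> : lead_minor (\matrix_(r < a + b, c < k) (r == c :> nat)%:R)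
          = 1%:M :> 'M[K]_(_).
  by apply/matrixP => r c; rewrite !mxE.
by rewrite det1 oner_neq0.
Qed.

Section Projections.
Variables (K : nzRingType) (k j i : nat).

Lemma Pmx_split : (j <= i)%N -> Pmx K k i = Pmx K k j + Pji K k j i.
Proof.
move=> le_ji; apply/matrixP => r c; rewrite !mxE.
case: eqP => _ /=; last by rewrite addr0.
by case: (ltnP r j) => [/leq_trans->|] //; rewrite ?addr0 ?add0r.
Qed.

Lemma Pji_mulmxE p (X : 'M[K]_(k, p)) r c :
  (Pji K k j i *m X) r c = ((j <= r)%N && (r < i)%N)%:R * X r c.
Proof.
rewrite mxE (bigD1 r) //= big1 ?addr0 => [|s /negPf neq_sr]; first by rewrite mxE eqxx.
by rewrite mxE eq_sym neq_sr mul0r.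
Qed.

Lemma Jmx_mul_trmx : Jmx K k j i *m (Jmx K k j i)^T = Pji K k j i.
Proof.
apply/matrixP => r s; rewrite !mxE.
have [/andP[le_jr lt_ri] | out_r] := boolP ((j <= r)%N && (r < i)%N).
  have lt_c : (r - j < i - j)%N by lia.
  rewrite (bigD1 (Ordinal lt_c)) //= big1 => [|c neq_c]; rewrite !mxE.
    by rewrite !natrDE /= subnKC // eqxx mul1r addr0 andbT eq_sym.
  rewrite !natrDE; case: eqP => [def_r|]; last by rewrite mul0r.
  by case/eqP: neq_c; apply: val_inj => /=; lia.
rewrite andbF big1 // => c _; rewrite !mxE !natrDE.
by case: eqP => [def_r|]; [move: out_r (ltn_ord c); lia | rewrite mul0r].
Qed.

Lemma trmx_Jmx_mul : (i <= k)%N -> (Jmx K k j i)^T *m Jmx K k j i = 1%:M.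
Proof.
move=> le_ik; apply/matrixP => c d; rewrite !mxE.
have lt_r : (j + c < k)%N by move: (ltn_ord c); lia.
rewrite (bigD1 (Ordinal lt_r)) //= big1 => [|r neq_r]; rewrite !mxE.
  by rewrite !natrDE eqxx mul1r addr0 eqn_add2l.
rewrite !natrDE; case: eqP => [def_r|]; last by rewrite mul0r.
by case/eqP: neq_r; apply: val_inj.
Qed.

End Projections.

Lemma lead_minor_mulmx_eq0 (K : fieldType) m n p (M : 'M[K]_(m, n))
    (X : 'M[K]_(n, p)) :
  \det (lead_minor M) != 0 ->
  (forall (r : 'I_n) c, (minn m n <= r)%N -> X r c = 0) -> M *m X = 0 -> X = 0.
Proof.
move=> detM X_low MX0.
pose Xtop := \matrix_(r < minn m n, c < p) X (widen_ord (geq_minr m n) r) c.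
have MXtop : lead_minor M *m Xtop = 0.
  apply/matrixP => r c.
  transitivity ((M *m X) (widen_ord (geq_minl m n) r) c); last by rewrite MX0 !mxE.
  rewrite !mxE [RHS](bigID (fun s : 'I_n => (s < minn m n)%N)) /=.
  rewrite [X in _ = _ + X]big1 ?addr0 => [|s]; last first.
    by rewrite -leqNgt => /X_low->; rewrite mulr0.
  by rewrite (big_ord_narrow (geq_minr m n)); apply: eq_bigr => s _; rewrite !mxE.
have unitM : lead_minor M \in unitmx by rewrite unitmxE unitfE.
have Xtop0 : Xtop = 0 by rewrite -(mulKmx unitM Xtop) MXtop mulmx0.
apply/matrixP => r c; rewrite mxE; case: (ltnP r (minn m n)) => [lt_r|/X_low//].
have := congr1 (fun A : 'M_(minn m n, p) => A (Ordinal lt_r) c) Xtop0; rewrite !mxE.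
by rewrite (_ : widen_ord _ _ = r) //; apply: val_inj.
Qed.

Lemma mulmx_span_ker (K : pzRingType) p q r (Y : 'M[K]_(r, p)) (M : 'M[K]_(p, q)) :
  (forall w : 'cV_p, Y *m w = 0 <-> exists y, w = M *m y) -> Y *m M = 0.
Proof.
move=> kerY; apply/matrixP => x c.
have /(congr1 (fun v : 'cV_r => v x 0)) := (kerY _).2 (ex_intro _ (delta_mx c 0) erefl).
by rewrite mulmxA -colE !mxE.
Qed.

Lemma mulmx_row_span_ker (K : pzRingType) p q1 q2 r (Y : 'M[K]_(r, p))
    (E : 'M[K]_(p, q1)) (F : 'M[K]_(p, q2)) :
  (forall w : 'cV_p, Y *m w = 0 <-> exists y, w = row_mx E F *m y) ->
  Y *m E = 0 /\ Y *m F = 0.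
Proof.
by move=> /mulmx_span_ker; rewrite mul_mx_row -row_mx0 => /eq_row_mx.
Qed.

Lemma row_mx_scale_span (K : fieldType) p q l (E : 'M[K]_(p, q))
    (H : 'M[K]_(p, l)) (c : K) (v w : 'cV[K]_p) :
  c != 0 ->
  (exists y, w = v + row_mx E H *m y) <->
  (exists y, w = v + row_mx E (c *: H) *m y).
Proof.
move=> c_neq0; split=> -[y ->]; rewrite -[y]vsubmxK.
  exists (col_mx (usubmx y) (c^-1 *: dsubmx y)).
  by rewrite !mul_row_col -scalemxAr -scalemxAl scalerA mulVf // scale1r.
exists (col_mx (usubmx y) (c *: dsubmx y)).
by rewrite !mul_row_col -scalemxAl scalemxAr.
Qed.

Section PerturbedKernel.
Variables (K : fieldType) (p q l r s : nat).
Variables (Y : 'M[K]_(r, p)) (B : 'M[K]_(r, s)).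
Variables (P : 'M[K]_(s, p)) (J : 'M[K]_(s, l)).
Variables (E : 'M[K]_(p, q)) (F G : 'M[K]_(p, l)).
Hypothesis kerY : forall w : 'cV_p, Y *m w = 0 <-> exists y, w = row_mx E G *m y.
Hypothesis YF : Y *m F = - (B *m J).
Hypotheses (PE : P *m E = 0) (PF : P *m F = J) (PG : P *m G = J).
Hypothesis J_inj : forall u : 'cV_l, J *m u = 0 -> u = 0.
Hypothesis P_in_J : forall v : 'cV_p, exists z, P *m v = J *m z.

Lemma ker_add_scale_mulmx tau (w : 'cV_p) :
  (Y + tau *: (B *m P)) *m w = 0 <->
  exists y, w = row_mx E (tau *: F + (1 - tau) *: G) *m y.
Proof.
have [YE YG] := mulmx_row_span_ker kerY.
split=> [Mw0 | [y ->]]; last first.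
  suff MH : (Y + tau *: (B *m P)) *m (tau *: F + (1 - tau) *: G) = 0.
    by rewrite mulmxA mul_mx_row mulmxDl -scalemxAl -mulmxA PE mulmx0 scaler0 YE
      addr0 MH row_mx0 mul0mx.
  rewrite mulmxDl !mulmxDr -!scalemxAl -!scalemxAr -!mulmxA PF PG YF YG.
  rewrite scaler0 addr0 !scalerA scalerN addrA -scaleNr -!scalerDl.
  suff -> : - tau + tau * tau + tau * (1 - tau) = 0 by rewrite scale0r.
  by ring.
have [z Pw] := P_in_J w.
have Yw : Y *m w = - tau *: (B *m J *m z).
  by apply/eqP; rewrite scaleNr -addr_eq0 -mulmxA -Pw mulmxA scalemxAl -mulmxDl Mw0.
have [y def_w] : exists y, w - tau *: (F *m z) = row_mx E G *m y.
  apply/kerY; rewrite mulmxBr -scalemxAr mulmxA YF Yw mulNmx.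
  by rewrite scaleNr scalerN opprK addNr.
rewrite -[y]vsubmxK mul_row_col in def_w.
have y2E : dsubmx y = (1 - tau) *: z.
  apply/eqP; rewrite -subr_eq0; apply/eqP/J_inj.
  have /(congr1 (mulmx P)) := def_w.
  rewrite mulmxBr -scalemxAr !mulmxDr !mulmxA PF PE PG mul0mx add0r Pw.
  by rewrite mulmxN -scalemxAr scalerBl scale1r => <-; rewrite subrr.
exists (col_mx (usubmx y) z); rewrite mul_row_col mulmxDl -!scalemxAl.
rewrite -(subrK (tau *: (F *m z)) w) def_w y2E -scalemxAr -addrA.
by rewrite [_ + tau *: _]addrC.
Qed.

End PerturbedKernel.

Section FixedParameters.
Variables (K : fieldType) (r k q j i : nat).
Variables (AA Bm : 'M[K]_(r, k)) (Cm : 'M[K]_(k, k + k)) (dv : 'cV[K]_k).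
Variables (eps : 'cV[K]_(k + k)) (E : 'M[K]_(k + k, q)) (F G : 'M[K]_(k + k, i - j)).

Local Notation Am := (row_mx AA (- AA)).
Local Notation Y h := (Am + Bm *m Pmx K k h *m Cm).
Local Notation Q := (Pji K k j i).
Local Notation J := (Jmx K k j i).

Hypothesis detB : \det (lead_minor Bm) != 0.
Hypotheses (le_ji : (j <= i)%N) (le_i_minor : (i <= minn r k)%N).
Hypotheses (eps_sym : usubmx eps - dsubmx eps = 0) (eps_C : Cm *m eps = - dv).
Hypothesis kerYi :
  forall w : 'cV_(k + k), Y i *m w = 0 <-> exists y, w = row_mx E F *m y.
Hypothesis kerYj :
  forall w : 'cV_(k + k), Y j *m w = 0 <-> exists y, w = row_mx E G *m y.
Hypotheses (QCF : Q *m Cm *m F = J) (QCG : Q *m Cm *m G = J).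

Lemma Am_eps : Am *m eps = 0.
Proof. by rewrite -[eps]vsubmxK mul_row_col mulNmx -mulmxBr eps_sym mulmx0. Qed.

Lemma Yi_split : Y i = Y j + Bm *m (Q *m Cm).
Proof. by rewrite (Pmx_split _ _ le_ji) mulmxDr mulmxDl addrA !mulmxA. Qed.

Lemma QCE : Q *m Cm *m E = 0.
Proof.
rewrite -mulmxA; apply: (lead_minor_mulmx_eq0 detB) => [s c le_s|].
  by rewrite Pji_mulmxE ltnNge (leq_trans le_i_minor le_s) andbF mul0r.
have [YiE _] := mulmx_row_span_ker kerYi; have [YjE _] := mulmx_row_span_ker kerYj.
by move: YiE; rewrite Yi_split mulmxDl YjE add0r -!mulmxA.
Qed.

Lemma YjF : Y j *m F = - (Bm *m J).
Proof.
have [_ YiF] := mulmx_row_span_ker kerYi.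
by apply/eqP; rewrite -addr_eq0 -QCF mulmxA -mulmxDl -Yi_split YiF.
Qed.

Lemma equation_shift tau (w : 'cV_(k + k)) :
  Am *m w + Bm *m (Pmx K k j + tau *: Q) *m (Cm *m w + dv) =
  (Y j + tau *: (Bm *m (Q *m Cm))) *m (w - eps).
Proof.
have -> : Cm *m w + dv = Cm *m (w - eps) by rewrite mulmxBr eps_C opprK.
rewrite -{1}(subrK eps w) [Am *m _]mulmxDr Am_eps addr0 -addrA mulmxDl.
congr (_ + _); rewrite mulmxA; congr (_ *m _).
by rewrite mulmxDr mulmxDl -scalemxAr -scalemxAl !mulmxA.
Qed.

Lemma solution_set_span tau (w : 'cV_(k + k)) :
  Am *m w + Bm *m (Pmx K k j + tau *: Q) *m (Cm *m w + dv) = 0 <->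
  exists y, w = eps + row_mx E (tau *: F + (1 - tau) *: G) *m y.
Proof.
have le_ik : (i <= k)%N by rewrite (leq_trans le_i_minor) ?geq_minr.
have J_inj (u : 'cV_(i - j)) : J *m u = 0 -> u = 0.
  by move=> Ju0; rewrite -[u]mul1mx -(trmx_Jmx_mul _ j le_ik) -mulmxA Ju0 mulmx0.
have QC_in_J (v : 'cV_(k + k)) : exists z, Q *m Cm *m v = J *m z.
  by exists (J^T *m (Cm *m v)); rewrite mulmxA -Jmx_mul_trmx !mulmxA.
rewrite equation_shift (ker_add_scale_mulmx kerYj YjF QCE QCF QCG J_inj QC_in_J).
split=> -[y def_w]; exists y; first by rewrite -def_w addrC subrK.
by rewrite def_w addrC addKr.
Qed.

End FixedParameters.

Local Open Scope complex_scope.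

Lemma convex_unit_neq0 (R : rcfType) (g : R[i]) (t : R) :
  `|g| = 1 -> g != -1 -> 0 <= t <= 1 -> t%:C + g * (1 - t)%:C != 0.
Proof.
move=> g1 g_neq /andP[t0 t1]; apply: contra g_neq => /eqP sum0.
have gt : g * (1 - t)%:C = - t%:C by apply/eqP; rewrite -addr_eq0 addrC sum0.
have normC x : 0 <= x -> `|x%:C| = x%:C by move=> x0; rewrite ger0_norm // lecR.
have t_eq : 1 - t = t.
  apply: complexI; move: (congr1 Num.norm gt).
  by rewrite normrM g1 mul1r normrN !normC // subr_ge0.
have t1_neq0 : (1 - t)%:C != 0 by rewrite fmorph_eq0; apply/eqP; lra.
by apply/eqP/(mulIf t1_neq0); rewrite gt mulN1r t_eq.
Qed.

Theorem lemma2p3 (R : realType) (k a b hs h0 : nat)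
    (A B : 'cV[R[i]]_k -> Prop) :
  (1 <= k)%N ->
  irreducible_set A -> irreducible_set B ->
  alg_dim A a -> alg_dim B b -> (b <= a)%N ->
  (hs <= b)%N ->
  (forall d, alg_dim (fun x => A x /\ B x) d -> (d < hs)%N) ->
  (a + b <= k + h0)%N ->
  (forall Z, irr_component Z (fun x => A x /\ B x) ->
     forall d, alg_dim Z d -> (h0 <= d)%N) ->
  let m := (k + k - (a + b))%N in
  generic_params (fun p : params R[i] a b k =>
    let: (AA, Bm, Cm, dv) := p in
    let Am := row_mx AA (- AA) in
    let Y h := Am + Bm *m Pmx R[i] k h *m Cm in
    forall eps : 'cV[R[i]]_(k + k),
      usubmx eps - dsubmx eps = 0 -> Cm *m eps = - dv ->
    forall j i : nat, (h0 <= j)%N -> (j < i)%N -> (i <= hs)%N ->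
    forall (E : 'M[R[i]]_(k + k, m - (i - j)))
           (F G : 'M[R[i]]_(k + k, i - j)),
      col_basis_of_ker (row_mx E F) (Y i) ->
      col_basis_of_ker (row_mx E G) (Y j) ->
      Pji R[i] k j i *m Cm *m F = Jmx R[i] k j i ->
      Pji R[i] k j i *m Cm *m G = Jmx R[i] k j i ->
      exists S : seq R[i], forall gamma : R[i],
        `|gamma| = 1 -> gamma \notin S ->
        forall t : R, 0 <= t <= 1 ->
        exists tau : R[i], (t != 0 -> tau != 0) /\
          forall w : 'cV[R[i]]_(k + k),
            Am *m w + Bm *m (Pmx R[i] k j + tau *: Pji R[i] k j i)
                       *m (Cm *m w + dv) = 0
            <-> exists y : 'cV[R[i]]_(m - (i - j) + (i - j)),
                  w = eps + row_mx E (t%:C *: F + (gamma * (1 - t)%:C) *: G) *m y).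
Proof.
(* Only the numerical constraints on a, b, hs, h0 matter: they force i < k. *)
move=> _ _ _ _ _ le_ba le_hb _ le_ab_k _ m.
apply: generic_paramsW (lead_minor_generic R[i] a b k) _.
move=> [[[AA Bm] Cm] dv] detB Am Y eps eps_sym eps_C j i le_h0j lt_ji le_ih E F G
  [_ kerYi] [_ kerYj] QCF QCG.
have le_i_minor : (i <= minn (a + b) k)%N by rewrite leq_min; lia.
exists [:: -1] => g g1; rewrite inE => g_neq t t01.
have s_neq0 := convex_unit_neq0 g1 g_neq t01.
set s := _ + _ in s_neq0.
exists (t%:C / s); split=> [t_neq0 | w].
  by rewrite mulf_neq0 ?invr_eq0 ?fmorph_eq0.
rewrite (solution_set_span detB (ltnW lt_ji) le_i_minor eps_sym eps_C
  kerYi kerYj QCF QCG).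
have -> : t%:C *: F + (g * (1 - t)%:C) *: G =
          s *: (t%:C / s *: F + (1 - t%:C / s) *: G).
  rewrite scalerDr !scalerA; congr (_ *: _ + _ *: _); first by rewrite mulrC divfK.
  by rewrite mulrBr mulr1 [s * _]mulrC divfK // /s addrAC subrr add0r.
exact: row_mx_scale_span.
Qed.
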